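(* Let $K$ be an infinite compact Hausdorff space. Then $biort_1(C(K))=s(K)$.
   Context: $C(K)$ is the Banach space of continuous real functions on $K$ with the sup norm; functionals on $C(K)$ are identified with Radon measures $\mu\in M(K)$, $\mu(f)=\int f\,d\mu$; $\delta_x$ is the Dirac measure at $x$. A measure is $n$-supported if it equals $a_1\delta_{x_1}+\dots+a_n\delta_{x_n}$ for some $x_k\in K$, $a_k\in\mathbb R$. A biorthogonal system $(f_i,\mu_i)_{i\in I}$ in $C(K)$ ($\mu_i(f_i)=1$, $\mu_i(f_j)=0$ for $i\neq j$) is $n$-supported if all $\mu_i$ are $n$-supported; $biort_n(C(K))$ is the supremum of $|I|$ over $n$-supported biorthogonal systems. $s(K)$ is the supremum of cardinalities of discrete subspaces of $K$. *)

From Stdlib Require Import Reals List.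
Open Scope R_scope.

Definition is_topology {X : Type} (open : (X -> Prop) -> Prop) : Prop :=
  open (fun _ => True) /\ open (fun _ => False) /\
  (forall U V, open U -> open V -> open (fun x => U x /\ V x)) /\
  (forall C : (X -> Prop) -> Prop, (forall U, C U -> open U) ->
      open (fun x => exists U, C U /\ U x)).

Definition compact_space {X : Type} (open : (X -> Prop) -> Prop) : Prop :=
  forall C : (X -> Prop) -> Prop,
    (forall U, C U -> open U) -> (forall x, exists U, C U /\ U x) ->
    exists l : list (X -> Prop), Forall C l /\ forall x, exists U, In U l /\ U x.

Definition hausdorff {X : Type} (open : (X -> Prop) -> Prop) : Prop :=
  forall x y : X, x <> y -> exists U V, open U /\ open V /\ U x /\ V y /\
    forall z, ~ (U z /\ V z).

Definition infinite_type (X : Type) : Prop :=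
  ~ exists l : list X, forall x, In x l.

Definition R_open (U : R -> Prop) : Prop :=
  forall y, U y -> exists eps, 0 < eps /\ forall z, Rabs (z - y) < eps -> U z.

Definition continuous_real {X : Type} (open : (X -> Prop) -> Prop) (f : X -> R) : Prop :=
  forall U, R_open U -> open (fun x => U (f x)).

Definition discrete_subspace {X : Type} (open : (X -> Prop) -> Prop) (D : X -> Prop) : Prop :=
  forall x, D x -> exists U, open U /\ U x /\ forall y, D y -> U y -> y = x.

Definition card_le (A B : Type) : Prop := exists g : A -> B, forall a a', g a = g a' -> a = a'.

Fixpoint finsum (n : nat) (g : nat -> R) : R :=
  match n with O => 0 | S m => finsum m g + g m end.

(** The n-supported measure  a_0 δ_{x_0} + ... + a_{n-1} δ_{x_{n-1}}  applied to f. *)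
Definition nsupp_apply {X : Type} (n : nat) (pts : nat -> X) (coef : nat -> R) (f : X -> R) : R :=
  finsum n (fun k => coef k * f (pts k)).

Definition nsupp_biorth_system {X : Type} (open : (X -> Prop) -> Prop) (n : nat)
    (I : Type) (f : I -> X -> R) (pts : I -> nat -> X) (coef : I -> nat -> R) : Prop :=
  (forall i, continuous_real open (f i)) /\
  (forall i, nsupp_apply n (pts i) (coef i) (f i) = 1) /\
  (forall i j, i <> j -> nsupp_apply n (pts i) (coef i) (f j) = 0).

(** "biort_n(C(K)) <= kappa": kappa bounds the size of every n-supported biorthogonal system. *)
Definition biort_le {X : Type} (open : (X -> Prop) -> Prop) (n : nat) (kappa : Type) : Prop :=
  forall (I : Type) f pts coef, nsupp_biorth_system open n I f pts coef -> card_le I kappa.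

Definition spread_le {X : Type} (open : (X -> Prop) -> Prop) (kappa : Type) : Prop :=
  forall D : X -> Prop, discrete_subspace open D -> card_le {x : X | D x} kappa.

From Stdlib Require Import Reals List Lra.
From HB Require Import structures.
From mathcomp Require Import all_ssreflect_compat ssrnum finmap.
From mathcomp Require Import boolp classical_sets reals topology normedtype.
From mathcomp Require Import Rstruct Rstruct_topology.

(* A 1-supported biorthogonal system is a family (f_i, c_i δ_{x_i}).  Since
   c_i f_i(x_i) = 1 and c_i f_j(x_i) = 0 for j <> i, the function f_j vanishes
   at x_i exactly when i <> j.  Hence the open sets {f_i <> 0} isolate the
   points x_i, which form a discrete subspace indexed injectively by i: this
   gives biort_1 <= s, in any topological space.

   Conversely, given a discrete subspace D, every x in D has an open
   neighbourhood W_x meeting D only in x, and a continuous "bump" g_x with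
   g_x(x) = 1 vanishing off W_x; then (g_x, δ_x)_{x in D} is 1-supported
   biorthogonal, so s <= biort_1.  Bump functions exist because a compact
   Hausdorff space is normal, and normal spaces separate disjoint closed sets
   by continuous real functions (Urysohn's lemma). *)

Import Num.Theory.
Local Open Scope classical_set_scope.

(* A type X with a topology [op] on it, viewed as a pointed topological space
   of MathComp-Analysis (the point x0 is needed by the cover characterisation
   of compactness). *)
Definition top_space (X : Type) (op : (X -> Prop) -> Prop) (Ht : is_topology op)
  (x0 : X) : Type := X.
Arguments top_space {X op} Ht x0.

Section OpenSetAxioms.
Context {X : Type} {op : (X -> Prop) -> Prop} (Ht : is_topology op).

Lemma is_topology_setT : op (@setT X).
Proof. by case: Ht. Qed.

Lemma is_topology_setI : setI_closed op.
Proof. by case: Ht => _ [_ [opI _]]. Qed.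

Lemma is_topology_bigcup (I : Type) (f : I -> set X) :
  (forall i, op (f i)) -> op (\bigcup_i f i).
Proof.
move=> fop; have [_ [_ [_ opU]]] := Ht.
have -> : \bigcup_i f i = (fun x => exists U, (exists i, U = f i) /\ U x).
  rewrite predeqE => x; split=> [[i _ fx]|[_ [[i ->] fx]]]; last by exists i.
  by exists (f i); split=> //; exists i.
by apply: opU => _ [i ->].
Qed.

End OpenSetAxioms.

HB.instance Definition _ X op Ht x0 := gen_eqMixin (@top_space X op Ht x0).
HB.instance Definition _ X op Ht x0 := gen_choiceMixin (@top_space X op Ht x0).
HB.instance Definition _ X op Ht x0 := isPointed.Build (@top_space X op Ht x0) x0.
HB.instance Definition _ X op Ht x0 := isOpenTopological.Build
  (@top_space X op Ht x0) (is_topology_setT Ht) (is_topology_setI Ht)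
  (is_topology_bigcup Ht).

Section TopSpace.
Context {X : Type} {op : (X -> Prop) -> Prop} (Ht : is_topology op) (x0 : X).
Let T := top_space Ht x0.

Lemma top_space_compact : compact_space op -> compact [set: T].
Proof.
move=> Hc; rewrite (@compact_cover T) => J D f fop cov.
pose C U := exists2 j, D j & U = f j.
have [l [lC lcov]] : exists l, Forall C l /\ forall x, exists U, In U l /\ U x.
  apply: Hc => [U [j Dj ->]|x]; first exact: fop.
  by have [j Dj fx] := cov x Logic.I; exists (f j); split=> //; exists j.
have [D' D'D D'l] : exists2 D' : {fset J}, {subset D' <= D} &
    forall U, In U l -> exists2 j, j \in D' & U = f j.
  elim: l lC {lcov} => [_|U l IH /Forall_cons_iff [[j Dj ->] /IH [D' D'D D'l]]].
    by exists fset0 => // j; rewrite inE.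
  exists (j |` D')%fset => [k|V [<-|/D'l [k kD' ->]]].
  - by rewrite !inE => /orP [/eqP -> | /D'D]; rewrite ?inE.
  - by exists j; rewrite // !inE eqxx.
  - by exists k; rewrite // !inE kD' orbT.
exists D' => // x _; have [U [/D'l [j jD' ->] fx]] := lcov x.
by exists j.
Qed.

Lemma top_space_hausdorff : hausdorff op -> hausdorff_space T.
Proof.
move=> Hh; rewrite open_hausdorff => x y /eqP /Hh [U [V [oU [oV [Ux [Vy UV]]]]]].
exists (U, V); first by rewrite !inE.
by split=> //; apply/eqP; rewrite -subset0 => z [Uz Vz]; exact: (UV z).
Qed.

End TopSpace.

Lemma R_open_open (U : set R) : R_open U -> open U.
Proof.
move=> oU; rewrite openE => x /oU [e [e0 eU]]; apply/nbhs_ballP.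
exists e; first exact/RltP.
by move=> y; rewrite /ball /= distrC => /RltP; apply: eU.
Qed.

Local Open Scope R_scope.

Definition has_bump_functions {X : Type} (op : (X -> Prop) -> Prop) : Prop :=
  forall (W : X -> Prop) (d : X), op W -> W d ->
  exists g, continuous_real op g /\ g d = 1 /\ forall y, ~ W y -> g y = 0.

(* Compact Hausdorff spaces are normal, and Urysohn's lemma separates the
   closed sets ~W and {d} by a continuous function. *)
Lemma compact_hausdorff_bumps {X : Type} (op : (X -> Prop) -> Prop) :
  is_topology op -> compact_space op -> hausdorff op -> has_bump_functions op.
Proof.
move=> Ht Hc Hh W d oW Wd.
pose T := top_space Ht d.
have hT : hausdorff_space T := top_space_hausdorff Ht d Hh.
have nT : normal_space T := compact_normal hT (top_space_compact Ht d Hc).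
have sepT : uniform_separator (~` W : set T) [set d].
  apply: (proj1 (@normal_separatorP R T) nT).
  - exact: (@open_closedC T W oW).
  - exact: accessible_closed_set1 (hausdorff_accessible hT) d.
  - by rewrite -subset0 => x [nWx xd]; apply: nWx; rewrite xd.
have /(@uniform_separatorP T R) [f [cf _ fW fd]] := sepT.
exists f; split; [|split].
- by move=> U /R_open_open oU; exact: (proj1 (continuousP _) cf _ oU).
- by apply: fd; exists d.
- by move=> y nWy; apply: fW; exists y.
Qed.

Lemma nsupp_apply1 {X : Type} (pts : nat -> X) (coef : nat -> R) (g : X -> R) :
  nsupp_apply 1 pts coef g = coef 0%nat * g (pts 0%nat).
Proof. by rewrite /nsupp_apply /= Rplus_0_l. Qed.

Lemma R_open_neq0 : R_open (fun r => r <> 0).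
Proof.
move=> y y0; exists (Rabs y); split; first exact: Rabs_pos_lt.
by move=> z yz z0; rewrite z0 Rminus_0_l Rabs_Ropp in yz; lra.
Qed.

Section OneSupportedSystems.
Context {X : Type} {op : (X -> Prop) -> Prop} {I : Type} {f : I -> X -> R}
  {pts : I -> nat -> X} {coef : I -> nat -> R}.
Hypothesis Hsys : nsupp_biorth_system op 1 I f pts coef.

Lemma biorth1_nonzero i j : f j (pts i 0%nat) <> 0 <-> i = j.
Proof.
have [_ [H1 H0]] := Hsys.
have := H1 i; rewrite nsupp_apply1 => Hii.
split=> [fji0|<- fii0]; last by rewrite fii0 Rmult_0_r in Hii; lra.
apply: contrapT => nij; apply: fji0.
have := H0 i j nij; rewrite nsupp_apply1 => /Rmult_integral [c0|//].
by rewrite c0 Rmult_0_l in Hii; lra.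
Qed.

Lemma biorth1_points_discrete : discrete_subspace op (fun x => exists i, x = pts i 0%nat).
Proof.
move=> _ [i ->]; exists (fun z => f i z <> 0); split; [|split].
- exact: (proj1 Hsys i) R_open_neq0.
- exact/biorth1_nonzero.
- by move=> _ [j ->] /biorth1_nonzero ->.
Qed.

Lemma biorth1_points_injective i j : pts i 0%nat = pts j 0%nat -> i = j.
Proof. by move=> ij; apply/biorth1_nonzero; rewrite ij; exact/biorth1_nonzero. Qed.

End OneSupportedSystems.

Lemma biort1_le_of_spread_le {X : Type} (op : (X -> Prop) -> Prop) (kappa : Type) :
  spread_le op kappa -> biort_le op 1 kappa.
Proof.
move=> Hs I f pts coef Hsys.
have [g g_inj] := Hs _ (biorth1_points_discrete Hsys).
exists (fun i => g (exist _ (pts i 0%nat) (ex_intro _ i erefl))).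
by move=> i j /g_inj /(congr1 sval) /= /(biorth1_points_injective Hsys).
Qed.

Lemma discrete_bumps {X : Type} {op : (X -> Prop) -> Prop} {D : X -> Prop} :
  has_bump_functions op -> discrete_subspace op D -> forall x, D x ->
  exists g, continuous_real op g /\ g x = 1 /\ forall y, D y -> y <> x -> g y = 0.
Proof.
move=> bumps HD x Dx; have [W [oW [Wx WD]]] := HD x Dx.
have [g [cg [gx gW]]] := bumps W x oW Wx.
by exists g; split=> //; split=> // y Dy yx; apply: gW => /(WD y Dy).
Qed.

Lemma discrete_biorth_system {X : Type} {op : (X -> Prop) -> Prop} {D : X -> Prop} :
  has_bump_functions op -> discrete_subspace op D ->
  exists f, nsupp_biorth_system op 1 {x | D x} f (fun i _ => sval i) (fun _ _ => 1).
Proof.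
move=> bumps HD.
have [f Hf] := choice (fun i : {x | D x} => discrete_bumps bumps HD _ (svalP i)).
exists f; split; [|split] => [i|i|i j ij]; rewrite ?nsupp_apply1.
- by case: (Hf i).
- by case: (Hf i) => _ [-> _]; ring.
- case: (Hf j) => _ [_ ->]; [ring | exact: svalP |].
  move=> ji; apply: ij; apply: eq_sig_hprop ji => x; exact: Prop_irrelevance.
Qed.

Lemma spread_le_of_biort1_le {X : Type} (op : (X -> Prop) -> Prop) (kappa : Type) :
  has_bump_functions op -> biort_le op 1 kappa -> spread_le op kappa.
Proof.
move=> bumps Hb D HD; have [f Hf] := discrete_biorth_system bumps HD.
exact: Hb Hf.
Qed.

Theorem mainTheorem5 (K : Type) (open : (K -> Prop) -> Prop)
  (Htop : is_topology open) (Hcpt : compact_space open) (Hhaus : hausdorff open)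
  (Hinf : infinite_type K) :
  forall kappa : Type, biort_le open 1 kappa <-> spread_le open kappa.
Proof.
move=> kappa; split; last exact: biort1_le_of_spread_le.
by apply: spread_le_of_biort1_le; exact: compact_hausdorff_bumps.
Qed.
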